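(* In an inventory system as in the context, every admissible policy $\pi$ satisfies $J_\pi(0)\ge N\,G(M)$, where $M=\frac{\Delta+\sum_{k=0}^{N-1}\mu_k}{N}$. In particular $J^*(0)\ge N\,G(M)$.
   Context: Inventory system: $N\ge1$; $G:\mathbb{R}_{\ge0}\to\mathbb{R}_{\ge0}$ is strictly convex and increasing with $G(0)=0$. Demands $w_0,\dots,w_{N-1}$ are independent random variables; $w_k$ has mean $\mu_k$, variance $\sigma_k^2$, and support exactly $[\mu_k-\Delta,\mu_k+\Delta]$, where $\Delta\ge0$ and $\mu_k-\Delta>0$ for all $k$. A (Markov) policy is a sequence $\pi=(\pi_0,\dots,\pi_{N-1})$ of measurable maps $\pi_k:\mathbb{R}_{\ge0}\to\mathbb{R}_{\ge0}$; the state evolves by $x_0=0$, $x_{k+1}=x_k+\pi_k(x_k)-w_k$. A policy is admissible if $x_k\ge0$ almost surely for all $k\in\{1,\dots,N\}$. Its expected cost is $J_\pi(0)=\sum_{k=0}^{N-1}\mathbb{E}[G(\pi_k(x_k))]$, and $J^*(0)$ is the infimum of $J_\pi(0)$ over admissible policies. *)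

From HB Require Import structures.
From mathcomp Require Import all_boot all_order all_algebra.
From mathcomp Require Import all_classical all_reals all_analysis.
Unset Printing Implicit Defensive.
Import Order.TTheory GRing.Theory Num.Theory.
Local Open Scope classical_set_scope.
Local Open Scope ring_scope.

(* Mutual independence of the finite family w_0, ..., w_{N-1} of real random
   variables: product rule for every choice of Borel sets (taking B k = setT
   recovers every subfamily). *)
Definition mutually_independent {d} {T : measurableType d} {R : realType}
  (P : probability T R) (N : nat) (w : nat -> {RV P >-> R}) : Prop :=
  forall B : nat -> set R, (forall k, measurable (B k)) ->
    P [set x | forall k, (k < N)%N -> B k (w k x)] =
    (\prod_(k < N) P (w k @^-1` B k))%E.

Definition support_exactly {d} {T : measurableType d} {R : realType}
  (P : probability T R) (X : {RV P >-> R}) (a b : R) : Prop :=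
  P [set x | X x \in `[a, b]] = 1%E /\
  forall y, y \in `[a, b] -> forall e : R, 0 < e ->
    (0 < P [set x | (`|X x - y| < e)%R])%E.

Fixpoint state {T : Type} {R : realType} (pi : nat -> R -> R)
  (w : nat -> T -> R) (k : nat) : T -> R :=
  match k with
  | 0 => fun _ => 0
  | k'.+1 => fun x => state pi w k' x + pi k' (state pi w k' x) - w k' x
  end.

(* The paper's
   pi_k : R>=0 -> R>=0 is represented by any measurable nonnegative extension
   to R (only its values on [0,+oo) matter, up to null sets). *)
Definition is_policy {R : realType} (pi : nat -> R -> R) : Prop :=
  forall k, measurable_fun setT (pi k) /\ forall x, 0 <= pi k x.

Definition admissible {d} {T : measurableType d} {R : realType}
  (P : probability T R) (N : nat) (w : nat -> {RV P >-> R})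
  (pi : nat -> R -> R) : Prop :=
  is_policy pi /\
  forall k, (1 <= k <= N)%N -> {ae P, forall x, 0 <= state pi (fun j => w j) k x}.

Definition cost {d} {T : measurableType d} {R : realType}
  (P : probability T R) (N : nat) (w : nat -> {RV P >-> R})
  (G : R -> R) (pi : nat -> R -> R) : \bar R :=
  (\sum_(k < N) \int[P]_x (G (pi k (state pi (fun j => w j) k x)))%:E)%E.

Definition opt_cost {d} {T : measurableType d} {R : realType}
  (P : probability T R) (N : nat) (w : nat -> {RV P >-> R})
  (G : R -> R) : \bar R :=
  ereal_inf [set cost P N w G pi | pi in admissible P N w].

From HB Require Import structures.
From mathcomp Require Import all_boot all_order all_algebra.
From mathcomp Require Import all_classical all_reals all_analysis.
From mathcomp Require Import measurable_realfun ring lra.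
Import Order.TTheory GRing.Theory Num.Theory.
Local Open Scope classical_set_scope.
Local Open Scope ring_scope.

(* Let c >= 0 be a subgradient of G at M > 0, so that the orders u_k satisfy
   sum_k G(u_k) >= N G(M) + c (sum_k u_k - N M).  The orders add up to the
   stock y = x_{N-1} + u_{N-1} after the last order plus the demands
   w_0, ..., w_{N-2}.  Now y depends only on w_0, ..., w_{N-2}, hence is
   independent of w_{N-1}, and x_N = y - w_{N-1} >= 0 a.s.; as the support of
   w_{N-1} reaches mu_{N-1} + Delta, this forces y >= mu_{N-1} + Delta a.s.
   Taking expectations, E[sum_k u_k] >= Delta + sum_k mu_k = N M, so the linear
   term is nonnegative. *)

Lemma strictly_convexW {R : realType} {G : R -> R} :
  (forall x y t, 0 <= x -> 0 <= y -> x != y -> 0 < t < 1 ->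
     G (t * x + (1 - t) * y) < t * G x + (1 - t) * G y) ->
  forall x y t, 0 <= x -> 0 <= y -> 0 < t < 1 ->
     G (t * x + (1 - t) * y) <= t * G x + (1 - t) * G y.
Proof.
move=> convG x y t x0 y0 t01; have [<-|xy] := eqVneq x y; last exact/ltW/convG.
by rewrite -!mulrDl subrKC !mul1r.
Qed.

Section convex_subgradient.
Context {R : realType} (G : R -> R).
Hypothesis convG : forall x y t, 0 <= x -> 0 <= y -> 0 < t < 1 ->
  G (t * x + (1 - t) * y) <= t * G x + (1 - t) * G y.

Lemma convex_slope_le x M z : 0 <= x -> x < M -> M < z ->
  (G M - G x) / (M - x) <= (G z - G M) / (z - M).
Proof.
move=> x0 xM Mz.
have zx : 0 < z - x by rewrite subr_gt0; exact: lt_trans Mz.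
have zx0 : z - x != 0 by rewrite gt_eqF.
set t := (z - M) / (z - x).
have t01 : 0 < t < 1.
  apply/andP; split; first by rewrite divr_gt0 // subr_gt0.
  by rewrite ltr_pdivrMr // mul1r ltrD2l ltrN2.
have tM : t * x + (1 - t) * z = M by rewrite /t; field.
have := convG _ _ _ x0 (le_trans x0 (ltW (lt_trans xM Mz))) t01.
rewrite tM => convM.
have chord : (z - x) * G M <= (z - M) * G x + (M - x) * G z.
  have -> : (z - M) * G x + (M - x) * G z = (z - x) * (t * G x + (1 - t) * G z).
    by rewrite /t; field.
  by rewrite ler_wpM2l // ltW.
rewrite ler_pdivrMr ?subr_gt0 // mulrAC ler_pdivlMr ?subr_gt0 //; nra.
Qed.

(* The supremum of the left chord slopes at M is a subgradient there. *)
Lemma convex_subgradient M : 0 < M -> G 0 <= G M ->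
  exists2 c, 0 <= c & forall y, 0 <= y -> G M + c * (y - M) <= G y.
Proof.
move=> M0 G0M.
pose S := [set (G M - G x) / (M - x) | x in [set x | 0 <= x < M]].
have S0 : S ((G M - G 0) / (M - 0)) by exists 0 => //=; rewrite lexx.
have S_ub z : M < z -> ubound S ((G z - G M) / (z - M)).
  by move=> Mz _ [x /andP[x0 xM] <-]; exact: convex_slope_le.
have supS : has_sup S.
  split; first by exists ((G M - G 0) / (M - 0)).
  by exists ((G (M + 1) - G M) / (M + 1 - M)); apply: S_ub; rewrite ltrDl.
exists (sup S).
  apply: le_trans (sup_upper_bound supS S0).
  by rewrite subr0 divr_ge0 ?subr_ge0 // ltW.
move=> y y0; have [yM|My|<-] := ltgtP y M.
- have Sy : S ((G M - G y) / (M - y)) by exists y => //=; rewrite y0.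
  have := sup_upper_bound supS Sy.
  rewrite ler_pdivrMr ?subr_gt0 //; nra.
- have := ge_sup (ex_intro _ _ S0) (S_ub _ My).
  rewrite ler_pdivlMr ?subr_gt0 //; lra.
- by rewrite subrr mulr0 addr0.
Qed.

End convex_subgradient.

Lemma sum_ge_subgradient {R : realType} (G : R -> R) (M c : R) (m : nat)
    (y : nat -> R) :
  (forall v, 0 <= v -> G M + c * (v - M) <= G v) -> (forall k, 0 <= y k) ->
  m%:R * G M + c * (\sum_(k < m) y k - m%:R * M) <= \sum_(k < m) G (y k).
Proof.
move=> subG y0.
have := @ler_sum _ _ (index_enum 'I_m) xpredT _ _ (fun k _ => subG _ (y0 k)).
by rewrite big_split /= -mulr_sumr sumrB !sumr_const card_ord !mulr_natl.
Qed.

Definition stock_after_order {T : Type} {R : realType} (pi : nat -> R -> R)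
    (wf : nat -> T -> R) (n : nat) (x : T) : R :=
  state pi wf n x + pi n (state pi wf n x).

Section state_telescope.
Context {T : Type} {R : realType} (pi : nat -> R -> R) (wf : nat -> T -> R).

Lemma state_telescope j x :
  state pi wf j x = \sum_(k < j) (pi k (state pi wf k x) - wf k x).
Proof.
elim: j => [|j IH]; first by rewrite big_ord0.
by rewrite /= big_ord_recr /= IH addrA.
Qed.

Lemma sum_orders_state n x :
  \sum_(k < n.+1) pi k (state pi wf k x) =
  stock_after_order pi wf n x + \sum_(k < n) wf k x.
Proof.
rewrite big_ord_recr /= /stock_after_order {2}(state_telescope n x) sumrB.
by ring.
Qed.

End state_telescope.

Lemma measurable_state {d} {T : measurableType d} {R : realType}
    (pi : nat -> R -> R) (wf : nat -> T -> R) j :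
  is_policy pi -> (forall k, (k < j)%N -> measurable_fun setT (wf k)) ->
  measurable_fun setT (state pi wf j).
Proof.
move=> hpi; elim: j => [|j IH] mwf /=; first exact: measurable_cst.
have mstate : measurable_fun setT (state pi wf j).
  by apply: IH => k kj; apply: mwf; exact: ltnW.
apply: measurable_funB; last exact: mwf.
by apply: measurable_funD => //; exact: measurableT_comp (hpi j).1 mstate.
Qed.

Lemma measurable_comp_nondecreasing_nonneg {d} {T : measurableType d}
    {R : realType} (G : R -> R) (u : T -> R) :
  (forall x y, 0 <= x -> x <= y -> G x <= G y) ->
  measurable_fun setT u -> (forall x, 0 <= u x) ->
  measurable_fun setT (G \o u).
Proof.
move=> monoG mU u0.
have -> : G \o u = (G \o Num.max 0) \o u.
  by apply: funext => x /=; rewrite max_r.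
apply: measurableT_comp mU; apply: nondecreasing_measurable => // x y xy /=.
by apply: monoG; [rewrite le_max lexx | exact: le_max2].
Qed.

Section integral_lemmas.
Context {d} {T : measurableType d} {R : realType}.
Local Open Scope ereal_scope.

Lemma le_integral_ge0_ae (mu : {measure set T -> \bar R}) (f g : T -> R) :
  measurable_fun setT f -> (forall x, (0 <= f x)%R) ->
  measurable_fun setT g -> {ae mu, forall x, (g x <= f x)%R} ->
  \int[mu]_x (g x)%:E <= \int[mu]_x (f x)%:E.
Proof.
move=> mf f0 /measurable_EFinP mg gf.
rewrite integralE; apply: (@le_trans _ _ (\int[mu]_x (EFin \o g)^\+ x)).
  rewrite -[leRHS]adde0 leeD2l // oppe_le0.
  by apply: integral_ge0 => x _; exact: funeneg_ge0.
apply: ae_ge0_le_integral => //.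
- exact: measurable_funepos.
- by move=> x _; rewrite lee_fin.
- exact/measurable_EFinP.
- apply: filterS gf => x gfx _.
  by rewrite funeposE /= ge_max !lee_fin f0 gfx.
Qed.

Lemma integrable_ae_bounded (P : probability T R) (f : T -> R) (r : R) :
  measurable_fun setT f -> {ae P, forall x, (`|f x| <= r)%R} ->
  P.-integrable setT (EFin \o f).
Proof.
move=> mf fr; apply/integrableP; split; first exact/measurable_EFinP.
apply: (@le_lt_trans _ _ ((`|r|)%:E * P setT)).
  apply: integral_le_bound => //; first exact/measurable_EFinP.
  by apply: filterS fr => x fxr _; rewrite /= lee_fin (le_trans fxr) ?ler_norm.
by rewrite probability_setT mule1 ltry.
Qed.

Lemma expectation_affine_sum (P : probability T R) (a c : R) n
    (X : nat -> {RV P >-> R}) (m : nat -> R) :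
  (forall k, (k < n)%N -> P.-integrable setT (EFin \o X k)) ->
  (forall k, (k < n)%N -> 'E_P[X k] = (m k)%:E) ->
  \int[P]_x (a + c * \sum_(k < n) X k x)%:E = (a + c * \sum_(k < n) m k)%:E.
Proof.
move=> iX EX.
have iS : P.-integrable setT (fun x => \sum_(k < n) (X k x)%:E).
  by apply: integrable_sum => // k _; exact: iX.
under eq_integral do rewrite EFinD EFinM -sumEFin.
rewrite integralD //;
  [|exact: finite_measure_integrable_cst | exact: integrableZl].
rewrite integral_cst // [X in (_ * X)%E](_ : _ = 1%E).
  2: exact: probability_setT.
rewrite mule1 integralZl // integral_sum //.
  rewrite (eq_bigr (fun k : 'I_n => (m k)%:E)); last first.
    by move=> k _; rewrite -expectation_def EX.
  by rewrite sumEFin -EFinM -EFinD.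
by move=> k; exact: iX.
Qed.

End integral_lemmas.

Lemma measurable_stock_after_order {d} {T : measurableType d} {R : realType}
    (pi : nat -> R -> R) (wf : nat -> T -> R) n :
  is_policy pi -> (forall k, (k < n)%N -> measurable_fun setT (wf k)) ->
  measurable_fun setT (stock_after_order pi wf n).
Proof.
move=> hpi mwf; apply: measurable_funD; first exact: measurable_state.
by apply: measurableT_comp; [exact: (hpi n).1 | exact: measurable_state].
Qed.

Definition prefix_rectangles {T : Type} {R : realType} (wf : nat -> T -> R)
    (n : nat) : set (set T) :=
  [set A | exists2 B : nat -> set R, (forall k, measurable (B k)) &
     A = [set x | forall k, (k < n)%N -> B k (wf k x)]].

Lemma prefix_rectangles_setI_closed {T : Type} {R : realType}
    (wf : nat -> T -> R) n :
  setI_closed (prefix_rectangles wf n).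
Proof.
move=> _ _ [B1 mB1 ->] [B2 mB2 ->]; exists (fun k => B1 k `&` B2 k).
  by move=> k; exact: measurableI.
apply/seteqP; split => x /=.
  by move=> [h1 h2] k kn; split; [exact: h1 | exact: h2].
by move=> h; split => k kn; have [] := h k kn.
Qed.

Lemma measurable_prefix_coord {T : pointedType} {R : realType}
    (wf : nat -> T -> R) n k : (k < n)%N ->
  measurable_fun (setT : set (g_sigma_algebraType (prefix_rectangles wf n)))
    (wf k).
Proof.
move=> kn _ Y mY; apply: sub_sigma_algebra.
exists (fun j => if j == k then Y else setT); first by move=> j; case: ifP.
apply/seteqP; split => x /=.
  by move=> [_ Yx] j jn; case: eqP => [->|].
by move=> h; split => //; have := h k kn; rewrite eqxx.
Qed.

Section independent_of.
Context {d} {T : measurableType d} {R : realType} (P : probability T R).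
Local Open Scope ereal_scope.

Definition independent_of (E : set T) : set (set T) :=
  [set A | measurable A /\ P (A `&` E) = P A * P E].

Lemma lambda_system_independent_of E : measurable E ->
  lambda_system setT (independent_of E).
Proof.
move=> mE; have finE : P E \is a fin_num by exact: fin_num_measure.
have finP B : measurable B -> P B < +oo.
  by move=> mB; rewrite ltey_eq fin_num_measure.
split => //.
- by split; [exact: measurableT | rewrite setTI probability_setT mul1e].
- move=> A1 A2 A21 [mA1 hA1] [mA2 hA2]; split; first exact: measurableD.
  have A12 : A1 `&` A2 = A2 by exact/setIidr.
  rewrite setIDAC setIDA measureD ?finP //; try exact: measurableI.
  rewrite setIAC A12 measureD ?finP // A12 muleBl //; last first.
    by rewrite fin_num_adde_defl // fin_numN fin_num_measure.
  by rewrite -hA1 -hA2.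
- move=> F ndF HF; have mF k : measurable (F k) := (HF k).1.
  split; first exact: bigcupT_measurable.
  have cvgF := nondecreasing_cvg_mu (mu := P) mF (bigcupT_measurable _ mF) ndF.
  have cvgFE : (fun k => P (F k `&` E)) @ \oo --> P (\bigcup_k F k `&` E).
    rewrite setI_bigcupl; apply: nondecreasing_cvg_mu.
    - by move=> k; exact: measurableI.
    - by apply: bigcupT_measurable => k; exact: measurableI.
    - move=> i j ij; rewrite subsetEset; apply: setSI; rewrite -subsetEset.
      exact: ndF.
  have FE : (fun k => P (F k) * P E) = (fun k => P (F k `&` E)).
    by apply: funext => k; rewrite (HF k).2.
  have := cvgeZr finE cvgF; rewrite FE => cvgFE'.
  exact: cvg_unique cvgFE cvgFE'.
Qed.

End independent_of.

Section prefix_independence.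
Context {d} {T : measurableType d} {R : realType} {P : probability T R}.
Context {n : nat} {w : nat -> {RV P >-> R}}.
Hypothesis indep : mutually_independent P n.+1 w.
Local Open Scope ereal_scope.

Lemma measurable_prefix_rectangle A :
  prefix_rectangles (fun k => w k) n A -> measurable A.
Proof.
move=> [B mB ->].
have -> : [set x | forall k, (k < n)%N -> B k (w k x)] =
    \bigcap_(k in [set k | (k < n)%N]) (w k @^-1` B k).
  by apply/seteqP; split => x /= h k kn; exact: h.
by apply: bigcap_measurableType => k _; exact: measurable_funPTI.
Qed.

Lemma independent_prefix_rectangle A C :
  prefix_rectangles (fun k => w k) n A -> measurable C ->
  P (A `&` w n @^-1` C) = P A * P (w n @^-1` C).
Proof.
move=> [B mB ->] mC.
pose B' D k := if k == n then D else B k.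
have extend D : measurable D ->
    P [set x | forall k, (k < n.+1)%N -> B' D k (w k x)] =
    (\prod_(k < n) P (w k @^-1` B k)) * P (w n @^-1` D).
  move=> mD; rewrite indep; last by move=> k; rewrite /B'; case: ifP.
  rewrite big_ord_recr /= /B' eqxx; congr (_ * _).
  by apply: eq_bigr => k _; rewrite ifF // ltn_eqF.
have restrict D : [set x | forall k, (k < n)%N -> B k (w k x)] `&` w n @^-1` D =
    [set x | forall k, (k < n.+1)%N -> B' D k (w k x)].
  apply/seteqP; split => x /=.
    move=> [h Dx] k; rewrite ltnS leq_eqVlt /B'.
    by case: eqP => [-> _|_ /= kn]; [exact: Dx | exact: h].
  move=> h; split; last by have := h n (ltnSn n); rewrite /B' eqxx.
  by move=> k kn; have := h k (ltnW kn); rewrite /B' ltn_eqF.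
rewrite restrict extend //.
have := extend setT measurableT; rewrite -restrict !setIT => ->.
by rewrite preimage_setT probability_setT mule1.
Qed.

Lemma independent_prefix_sigma C A : measurable C ->
  <<s prefix_rectangles (fun k => w k) n >> A ->
  P (A `&` w n @^-1` C) = P A * P (w n @^-1` C).
Proof.
move=> mC; set E := w n @^-1` C.
have mE : measurable E by exact: measurable_funPTI.
suff : <<s prefix_rectangles (fun k => w k) n >> `<=` independent_of P E.
  by move=> sH /sH[].
apply: lambda_system_subset => //; first exact: prefix_rectangles_setI_closed.
  exact: lambda_system_independent_of.
move=> _ [B mB ->]; split.
  by apply: measurable_prefix_rectangle; exists B.
by apply: independent_prefix_rectangle => //; exists B.
Qed.

End prefix_independence.

Section stock_after_order_bound.
Context {d} {T : measurableType d} {R : realType} {P : probability T R}.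
Context {n : nat} {w : nat -> {RV P >-> R}}.
Context { pi : nat -> R -> R }.
Hypotheses (indep : mutually_independent P n.+1 w) (hpi : is_policy pi).
Hypothesis stock_ge0 :
  {ae P, forall x, (0 <= state pi (fun j => w j) n.+1 x)%R}.
Local Notation y := (stock_after_order pi (fun j => w j) n).
Local Open Scope ereal_scope.

Lemma stock_after_order_lt_null c :
  0 < P (w n @^-1` `]c, +oo[) -> P [set x | (y x < c)%R] = 0.
Proof.
move=> Pw_gt0.
have yE : [set x | (y x < c)%R] = setT `&` y @^-1` `]-oo, c[.
  by apply/seteqP; split => x /=; rewrite in_itv /=; [move=> ?; split | case].
(* [y] only depends on the demands before period [n]. *)
have sy : <<s prefix_rectangles (fun k => w k) n >> [set x | (y x < c)%R].
  rewrite yE; apply: (@measurable_stock_after_order _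
    (g_sigma_algebraType (prefix_rectangles (fun k => w k) n))) => //.
  by move=> k; exact: measurable_prefix_coord.
have : P ([set x | (y x < c)%R] `&` w n @^-1` `]c, +oo[) = 0.
  have [N [mN PN0 sN]] := stock_ge0.
  apply/eqP; rewrite eq_le measure_ge0 andbT -PN0 le_measure ?inE //.
    apply: measurableI; last exact: measurable_funPTI.
    by rewrite yE; apply: measurable_stock_after_order => // k _.
  move=> x [/= yc]; rewrite in_itv /= andbT => cw; apply: sN => /=.
  by apply/negP; rewrite -ltNge subr_lt0 (lt_trans yc cw).
rewrite (independent_prefix_sigma indep) //; move/eqP; rewrite mule_eq0.
by case/orP => /eqP // Pw0; move: Pw_gt0; rewrite Pw0 ltxx.
Qed.

Lemma stock_after_order_ge_ae b :
  (forall c, (c < b)%R -> 0 < P (w n @^-1` `]c, +oo[)) ->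
  {ae P, forall x, (b <= y x)%R}.
Proof.
move=> Pw_gt0.
apply: (@negligibleS _ _ _ _ (\bigcup_k [set x | (y x < b - k.+1%:R^-1)%R])).
  move=> x /= /negP; rewrite -ltNge => /ltr_add_invr[k ybk].
  by exists k => //=; rewrite ltrBrDr.
apply: negligible_bigcup => k; apply/negligibleP.
  have -> : [set x | (y x < b - k.+1%:R^-1)%R] =
      setT `&` y @^-1` `]-oo, (b - k.+1%:R^-1)%R[.
    by apply/seteqP; split => x /=; rewrite in_itv /=; [move=> ?; split | case].
  by apply: measurable_stock_after_order => // j _.
apply: stock_after_order_lt_null; apply: Pw_gt0.
by rewrite ltrBlDr ltrDl invr_gt0.
Qed.

End stock_after_order_bound.

Section support_exactly.
Context {d} {T : measurableType d} {R : realType} {P : probability T R}.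
Context {X : {RV P >-> R}} {a b : R}.
Hypothesis suppX : support_exactly P X a b.
Local Open Scope ereal_scope.

Lemma support_exactly_integrable : P.-integrable setT (EFin \o X).
Proof.
apply: (@integrable_ae_bounded _ _ _ P X (`|a| + `|b|)%R).
  exact: measurable_funP.
have mS : measurable [set x | X x \in `[a, b]].
  by rewrite -[Y in measurable Y]/(X @^-1` `[a, b]); exact: measurable_funPTI.
have PSC : P (~` [set x | X x \in `[a, b]]) = 0.
  by rewrite probability_setC // suppX.1 subee.
apply: (@negligibleS _ _ _ _ (~` [set x | X x \in `[a, b]])); last first.
  by exists (~` [set x | X x \in `[a, b]]); split => //; exact: measurableC.
apply: subsetC => x /=; rewrite in_itv /= => /andP[ax xb].
have := ler_norm a; have := ler_norm (- a); have := ler_norm b.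
rewrite normrN; have := normr_ge0 a; have := normr_ge0 b.
by rewrite ler_norml; lra.
Qed.

Lemma support_exactly_tail_gt0 c : (a <= b)%R -> (c < b)%R ->
  0 < P (X @^-1` `]c, +oo[).
Proof.
move=> ab cb; have := suppX.2 b _ (b - c)%R.
rewrite in_itv /= ab lexx subr_gt0 => /(_ isT cb) /lt_le_trans; apply.
have ballE : [set x | (`|X x - b| < b - c)%R] = X @^-1` `]c, (b + (b - c))%R[.
  have bbc : (b - (b - c) = c)%R by ring.
  by apply/seteqP; split => x /=; rewrite ltr_distl in_itv /= bbc.
apply: le_measure; rewrite ?inE ?ballE; try exact: measurable_funPTI.
by move=> x /=; rewrite !in_itv /= andbT => /andP[].
Qed.

End support_exactly.

Lemma cost_ge_subgradient {d} {T : measurableType d} {R : realType}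
    {P : probability T R} {n} {w : nat -> {RV P >-> R}} {G : R -> R}
    { pi : nat -> R -> R } {M c b : R} {m : nat -> R} :
  is_policy pi -> (forall x, 0 <= x -> 0 <= G x) ->
  (forall x y, 0 <= x -> x <= y -> G x <= G y) ->
  0 <= c -> (forall y, 0 <= y -> G M + c * (y - M) <= G y) ->
  (forall k, (k < n)%N -> P.-integrable setT (EFin \o w k)) ->
  (forall k, (k < n)%N -> ('E_P[w k] = (m k)%:E)%E) ->
  {ae P, forall x, b <= stock_after_order pi (fun j => w j) n x} ->
  ((n.+1%:R * G M + c * (b + \sum_(k < n) m k - n.+1%:R * M))%:E <=
   cost P n.+1 w G pi)%E.
Proof.
move=> hpi G0 monoG c0 subG iw Ew y_ge.
pose u k x := pi k (state pi (fun j => w j) k x).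
have u0 k x : 0 <= u k x by exact: (hpi k).2.
have mGu k : measurable_fun setT (G \o u k).
  apply: measurable_comp_nondecreasing_nonneg => //.
  apply: measurableT_comp; first exact: (hpi k).1.
  by apply: measurable_state => // j _.
have -> : cost P n.+1 w G pi = (\int[P]_x (\sum_(k < n.+1) G (u k x))%:E)%E.
  rewrite /cost; under [X in _ = X]eq_integral do rewrite -sumEFin.
  rewrite ge0_integral_sum // => [k|k x _]; last by rewrite lee_fin G0.
  by apply/measurable_EFinP; exact: mGu.
pose a := n.+1%:R * G M + c * (b - n.+1%:R * M).
have -> : ((n.+1%:R * G M + c * (b + \sum_(k < n) m k - n.+1%:R * M))%:E =
    \int[P]_x (a + c * \sum_(k < n) w k x)%:E)%E.
  by rewrite (expectation_affine_sum _ _ _ _ _ _ iw Ew) /a; congr EFin; ring.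
apply: le_integral_ge0_ae => //.
- by apply: measurable_sum => k; exact: mGu.
- by move=> x; apply: sumr_ge0 => k _; exact: G0.
- apply: measurable_funD => //; apply: measurable_funM => //.
  by apply: measurable_sum => k; exact: measurable_funP.
- apply: filterS y_ge => x bx.
  have := sum_ge_subgradient _ _ _ n.+1 _ subG (u0^~ x).
  rewrite sum_orders_state /a; have := ler_wpM2l c0 bx; lra.
Qed.

Theorem mainTheorem6 (R : realType) (d : measure_display) (T : measurableType d)
  (P : probability T R) (N : nat) (G : R -> R) (Delta : R) (mu sigma : nat -> R)
  (w : nat -> {RV P >-> R}) :
  (1 <= N)%N ->
  (forall x, 0 <= x -> 0 <= G x) ->
  (forall x y t, 0 <= x -> 0 <= y -> x != y -> 0 < t < 1 ->
     G (t * x + (1 - t) * y) < t * G x + (1 - t) * G y) ->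
  (forall x y, 0 <= x -> x < y -> G x < G y) ->
  G 0 = 0 ->
  0 <= Delta ->
  (forall k, (k < N)%N -> 0 < mu k - Delta) ->
  mutually_independent P N w ->
  (forall k, (k < N)%N -> ('E_P[w k] = (mu k)%:E)%E) ->
  (forall k, (k < N)%N -> variance P (w k) = (sigma k ^+ 2)%:E) ->
  (forall k, (k < N)%N -> support_exactly P (w k) (mu k - Delta) (mu k + Delta)) ->
  let M := (Delta + \sum_(k < N) mu k) / N%:R in
  (forall pi, admissible P N w pi -> ((N%:R * G M)%:E <= cost P N w G pi)%E) /\
  ((N%:R * G M)%:E <= opt_cost P N w G)%E.
Proof.
case: N => [//|n] _ G0 convG monoG _ D0 muD indep Ew _ supp M.
have mu_gt0 k : (k < n.+1)%N -> 0 < mu k by move/muD; lra.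
have NM : n.+1%:R * M = mu n + Delta + \sum_(k < n) mu k.
  rewrite /M mulrC divfK ?pnatr_eq0 //.
  have -> : \sum_(k < n.+1) mu k = \sum_(k < n) mu k + mu n.
    by rewrite big_ord_recr.
  lra.
have M_gt0 : 0 < M.
  have : 0 <= \sum_(k < n) mu k.
    by apply: sumr_ge0 => k _; apply/ltW/mu_gt0; exact: leqW.
  rewrite -[0 < M](pmulr_rgt0 _ (ltr0Sn _ n)) NM.
  by have := mu_gt0 n (ltnSn n); lra.
have monoG' x y : 0 <= x -> x <= y -> G x <= G y.
  by move=> x0; rewrite le_eqVlt => /predU1P[->|/(monoG _ _ x0)/ltW].
have [c c0 subG] := convex_subgradient _ (strictly_convexW convG) _ M_gt0
  (monoG' 0 M (lexx 0) (ltW M_gt0)).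
have cost_ge pi : admissible P n.+1 w pi ->
    ((n.+1%:R * G M)%:E <= cost P n.+1 w G pi)%E.
  move=> [hpi stock_ge0].
  have y_ge : {ae P, forall x,
      mu n + Delta <= stock_after_order pi (fun j => w j) n x}.
    apply: (stock_after_order_ge_ae indep hpi (stock_ge0 n.+1 (leqnn _))).
    move=> c' c'b.
    apply: (support_exactly_tail_gt0 (supp n (ltnSn n))) c'b.
    by have := muD n (ltnSn n); lra.
  have := cost_ge_subgradient (m := mu) hpi G0 monoG' c0 subG _ _ y_ge.
  rewrite NM subrr mulr0 addr0; apply.
  - by move=> k kn; exact: support_exactly_integrable (supp k (ltnW kn)).
  - by move=> k kn; exact: Ew k (ltnW kn).
split; first exact: cost_ge.
by apply/ereal_infP => _ [pi adm <-]; exact: cost_ge.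
Qed.
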